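(* Let $G=K(n_1,\dots,n_s)$ be a complete $s$-partite graph ($s\ge 2$) with parts $V_1,\dots,V_s$, $|V_j|=n_j$. If $j\in\{1,\dots,s\}$ satisfies $n_j\ge 6$, then $\chi_3(G)=\chi_3(G-V_j)+1$.
   Context: A map $f:V(G)\to\{1,\dots,k\}$ is a $3$-relaxed $k$-coloring if every vertex $u$ has at most $3$ neighbors $v$ with $f(v)=f(u)$; $\chi_3(G)$ is the minimum $k$ for which such a coloring exists. $G-V_j$ is the graph obtained by deleting the vertices of $V_j$. *)

From mathcomp Require Import all_boot.
Set Implicit Arguments. Unset Strict Implicit. Unset Printing Implicit Defensive.

(* A simple graph is an irreflexive symmetric relation e on a finType T;
   induced subgraphs are given by a vertex set A : {set T}. *)

Definition relaxed3 (T : finType) (e : rel T) (A : {set T}) (k : nat)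
  (f : T -> 'I_k) : bool :=
  [forall u in A, #|[set v in A | e u v && (f v == f u)]| <= 3].

Definition colorable3 (T : finType) (e : rel T) (A : {set T}) (k : nat) : bool :=
  [exists f : {ffun T -> 'I_k}, relaxed3 e A f].

Lemma colorable3_ex (T : finType) (e : rel T) (A : {set T}) :
  exists k, colorable3 e A k.
Proof.
exists #|T|; apply/existsP; exists [ffun u => enum_rank u].
apply/forallP=> u; apply/implyP=> _.
apply: (@leq_trans 1) => //.
have -> : #|[set v in A | e u v && ([ffun u => enum_rank u] v == [ffun u => enum_rank u] u)]|
         = #|[set v in A | e u v && (v == u)]|.
  by apply: eq_card => v; rewrite !inE !ffunE (inj_eq enum_rank_inj).
rewrite -(cards1 u); apply: subset_leq_card; apply/subsetP=> v.
by rewrite !inE => /andP[_ /andP[_ ->]].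
Qed.

Definition chi3 (T : finType) (e : rel T) (A : {set T}) : nat :=
  ex_minn (colorable3_ex e A).

(* Complete s-partite graph K(n_0, ..., n_{s-1}): vertices are pairs (i, x)
   with x in part V_i of size n i; two vertices are adjacent iff they lie in
   different parts. *)
Definition cmp_vertex (s : nat) (n : 'I_s -> nat) : finType :=
  {i : 'I_s & 'I_(n i)}.

Definition cmp_adj (s : nat) (n : 'I_s -> nat) : rel (cmp_vertex n) :=
  fun u v => tag u != tag v.

Definition part (s : nat) (n : 'I_s -> nat) (j : 'I_s) : {set cmp_vertex n} :=
  [set v | tag v == j].
Arguments cmp_vertex : clear implicits.
Arguments cmp_adj : clear implicits.
Arguments part : clear implicits.

From mathcomp Require Import all_boot.
From mathcomp Require Import zify.
Set Implicit Arguments. Unset Strict Implicit. Unset Printing Implicit Defensive.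

(* Giving the independent part V_j a fresh colour shows chi_3(G) <= chi_3(G - V_j) + 1.
   Conversely, let f be a 3-relaxed k-colouring of G, C the colours used on V_j and,
   for c in C, V_c and W_c the c-coloured vertices inside and outside V_j. Every
   vertex of W_c is adjacent to all of V_c, so |W_c| <= 3, and |V_c| <= 3 once W_c is
   nonempty. We recolour G - V_j with k - 1 colours. If some W_c is empty, f already
   misses c. Otherwise, colour c is bad when |V_c| = 3, or |W_c| = 3 and |V_c| >= 2;
   then W_c lies inside a single part. If two colours a, b are bad, W_a and W_b both
   get colour a and the remaining vertices coloured in C are regrouped four per
   colour among C \ {a, b}. If at most one colour is bad, |W_c| + |V_c| <= 4 for all
   other c, so |V_j| >= 6 leaves at most 4(|C| - 1) vertices coloured in C outside
   V_j, regrouped four per colour among C minus one colour. *)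

Section RelaxedColoring.
Variables (T : finType) (e : rel T).

Definition clash (A : {set T}) k (g : T -> 'I_k) u :=
  [set v in A | e u v && (g v == g u)].

Lemma relaxed3P (A : {set T}) k (g : T -> 'I_k) :
  reflect {in A, forall u, #|clash A g u| <= 3} (relaxed3 e A g).
Proof. exact: forall_inP. Qed.

Lemma relaxed3S (A B : {set T}) k (g : T -> 'I_k) :
  A \subset B -> relaxed3 e B g -> relaxed3 e A g.
Proof.
move=> sAB /relaxed3P gB; apply/relaxed3P => u uA.
apply: leq_trans (gB u (subsetP sAB u uA)); apply: subset_leq_card.
by apply/subsetP => v; rewrite !inE => /andP[/(subsetP sAB) -> ->].
Qed.

Lemma relaxed3T_clash_card_le k (g : T -> 'I_k) u (Y : {set T}) :
  relaxed3 e setT g -> {in Y, forall v, e u v && (g v == g u)} -> #|Y| <= 3.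
Proof.
move=> /relaxed3P /(_ u (in_setT u)) le3 clY; apply: leq_trans le3.
by apply: subset_leq_card; apply/subsetP => v vY; rewrite inE in_setT clY.
Qed.

Lemma colorable3_image (A : {set T}) k k' (g : T -> 'I_k) :
  relaxed3 e A g -> 0 < k' -> #|g @: A| <= k' -> colorable3 e A k'.
Proof.
case: k' => // k' /relaxed3P gA _ le_gA.
pose S := enum (g @: A).
pose h (c : 'I_k) : 'I_k'.+1 := inord (index c S).
have h_inj : {in g @: A &, injective h}.
  have index_lt c : c \in g @: A -> index c S < k'.+1.
    by move=> cA; apply: leq_trans le_gA; rewrite cardE index_mem mem_enum.
  move=> c d cA dA /(congr1 val) /=; rewrite !inordK ?index_lt // /S.
  by apply: (index_inj c); rewrite mem_enum.
apply/existsP; exists [ffun v => h (g v)]; apply/relaxed3P => u uA.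
apply: leq_trans (gA u uA); apply: subset_leq_card; apply/subsetP => v.
rewrite !inE !ffunE => /and3P[vA euv /eqP huv]; rewrite vA euv.
by rewrite (h_inj _ _ (imset_f g vA) (imset_f g uA) huv) eqxx.
Qed.

Lemma card_image_avoid (A : {set T}) k (g : T -> 'I_k) (b : 'I_k) :
  {in A, forall v, g v != b} -> #|g @: A| <= k.-1.
Proof.
move=> gb; rewrite -[k in k.-1]card_ord -(cardsC1 b); apply: subset_leq_card.
by apply/subsetP => _ /imsetP[v vA ->]; rewrite !inE gb.
Qed.

Lemma card_clash_lt_fiber (A R : {set T}) k (g : T -> 'I_k) u :
  irreflexive e -> u \in R -> {in A :\: R, forall v, g v != g u} ->
  #|clash A g u| < #|[set v in R | g v == g u]|.
Proof.
move=> e_irr uR gR; rewrite (cardsD1 u [set v in R | _]) inE uR eqxx add1n ltnS.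
apply: subset_leq_card; apply/subsetP => v; rewrite !inE.
case/and3P=> vA euv guv; rewrite guv andbT; apply/andP; split.
  by apply: contraTneq euv => ->; rewrite e_irr.
by apply: contraTT guv => vR; apply: gR; rewrite inE vR.
Qed.

Lemma relaxed3_recolor (A : {set T}) k (C : {set 'I_k}) (f g : T -> 'I_k) :
  relaxed3 e setT f ->
  {in A, forall v, f v \notin C -> g v = f v} ->
  {in A, forall v, f v \in C -> g v \in C} ->
  {in A, forall u, f u \in C -> #|clash A g u| <= 3} ->
  relaxed3 e A g.
Proof.
move=> f_rel g_out g_in g_clash; apply/relaxed3P => u uA.
have [fuC|fuC] := boolP (f u \in C); first exact: g_clash.
apply: (relaxed3T_clash_card_le (u := u) f_rel) => v; rewrite inE => /and3P[vA -> /eqP guv].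
rewrite /= -(g_out u uA fuC) -guv.
have [fvC|fvC] := boolP (f v \in C); last by rewrite (g_out v vA fvC).
by move: (g_in v vA fvC); rewrite guv (g_out u uA fuC) (negbTE fuC).
Qed.

Lemma colorable3_add_independent (X : {set T}) k :
  {in X &, forall u v, ~~ e u v} -> colorable3 e (~: X) k ->
  colorable3 e setT k.+1.
Proof.
move=> X_indep /existsP[g /relaxed3P gX].
pose g' v := if v \in X then ord_max else widen_ord (leqnSn k) (g v).
have g'X v : (g' v == ord_max) = (v \in X).
  by rewrite /g'; case: ifP; rewrite ?eqxx // -val_eqE /= ltn_eqF.
apply/existsP; exists [ffun v => g' v]; apply/relaxed3P => u _.
have [uX|uX] := boolP (u \in X).
  rewrite (_ : clash _ _ _ = set0) ?cards0 //; apply/setP => v; rewrite !inE !ffunE.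
  apply/negbTE/negP => /and3P[_ euv /eqP guv].
  have vX : v \in X by rewrite -g'X guv g'X.
  by rewrite (negbTE (X_indep u v uX vX)) in euv.
have uXc : u \in ~: X by rewrite inE.
apply: leq_trans (gX u uXc).
apply: subset_leq_card; apply/subsetP => v; rewrite !inE !ffunE.
case/and3P => _ euv /eqP guv.
have vX : v \notin X by rewrite -g'X guv g'X.
move: guv; rewrite /g' (negbTE uX) (negbTE vX) => /(congr1 val) /= guv.
by rewrite euv; apply/eqP/val_inj.
Qed.

Lemma chi3_min (A : {set T}) k : colorable3 e A k -> chi3 e A <= k.
Proof. by rewrite /chi3; case: ex_minnP => m _; apply. Qed.

Lemma colorable3_chi3 (A : {set T}) : colorable3 e A (chi3 e A).
Proof. by rewrite /chi3; case: ex_minnP. Qed.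

Lemma chi3_le_add_independent (X : {set T}) :
  {in X &, forall u v, ~~ e u v} -> chi3 e setT <= (chi3 e (~: X)).+1.
Proof.
by move=> X_indep; apply/chi3_min/colorable3_add_independent/colorable3_chi3.
Qed.

End RelaxedColoring.

Lemma card_sum_fibers (T K : finType) (f : T -> K) (X : {set T}) (D : {set K}) :
  {in X, forall v, f v \in D} -> #|X| = \sum_(c in D) #|[set v in X | f v == c]|.
Proof.
move=> fXD; rewrite -sum1_card (partition_big f (mem D)) //=.
by apply: eq_bigr => c _; rewrite -sum1_card; apply: eq_bigl => v; rewrite inE.
Qed.

Lemma exists_map_small_fibers (T K : finType) m (R : {set T}) (P : {set K}) (d : K) :
  0 < m -> #|R| <= m * #|P| ->
  exists h : T -> K, {in R, forall v, h v \in P} /\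
    {in R, forall u, #|[set v in R | h v == h u]| <= m}.
Proof.
move=> m_gt0 le_RP.
pose idx v := index v (enum R).
have idx_lt v : v \in R -> idx v %/ m < size (enum P).
  move=> vR; rewrite -cardE ltn_divLR // mulnC.
  by apply: leq_trans le_RP; rewrite cardE index_mem mem_enum.
pose h v := nth d (enum P) (idx v %/ m).
exists h; split; first by move=> v vR; rewrite -mem_enum mem_nth ?idx_lt.
move=> u uR; rewrite -[m in _ <= m]card_ord.
pose rem v : 'I_m := Ordinal (ltn_pmod (idx v) m_gt0).
have quo_idx v : v \in [set v in R | h v == h u] -> v \in R /\ idx v %/ m = idx u %/ m.
  by rewrite inE => /andP[vR]; rewrite nth_uniq ?idx_lt ?enum_uniq // => /eqP.
apply: (@leq_card_in _ _ rem) => v w /quo_idx[vR quo_v] /quo_idx[wR quo_w].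
move=> /(congr1 val) /= rem_vw.
have : idx v = idx w by rewrite (divn_eq (idx v) m) (divn_eq (idx w) m) rem_vw quo_v quo_w.
by apply: (index_inj v); rewrite mem_enum.
Qed.

Definition multipartite (T : Type) (I : eqType) (tg : T -> I) : rel T :=
  fun u v => tg u != tg v.

Lemma multipartite_irr (T : Type) (I : eqType) (tg : T -> I) :
  irreflexive (multipartite tg).
Proof. by move=> u; rewrite /multipartite eqxx. Qed.

Section MultipartiteReduction.
Variables (T : finType) (I : eqType) (tg : T -> I) (j : I) (k : nat) (f : T -> 'I_k).
Local Notation e := (multipartite tg).
Local Notation V := [set v | tg v == j].
Local Notation W := (~: V).
Local Notation C := (f @: V).
Local Notation U := [set v in W | f v \in C].
Local Notation Vcol c := [set v in V | f v == c].
Local Notation Wcol c := [set v in W | f v == c].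

Hypothesis f_relaxed : relaxed3 e setT f.

Definition recolors (g : T -> 'I_k) := relaxed3 e W g /\ #|g @: W| <= k.-1.

Lemma card_Wcol c : c \in C -> #|Wcol c| <= 3.
Proof.
case/imsetP => w; rewrite inE => /eqP wj ->.
apply: (relaxed3T_clash_card_le (u := w) f_relaxed) => v.
by rewrite !inE /multipartite wj eq_sym => /andP[-> ->].
Qed.

Lemma card_Vcol_Wcol_other c x :
  x \in Wcol c -> #|Vcol c| + #|[set v in Wcol c | tg v != tg x]| <= 3.
Proof.
rewrite inE => /andP[xW /eqP fx]; rewrite -cardsUI.
rewrite (_ : _ :&: _ = set0) ?cards0 ?addn0; last first.
  by apply/setP => v; rewrite !inE; case: (tg v == j); rewrite ?andbF.
apply: (relaxed3T_clash_card_le (u := x) f_relaxed) => v; rewrite !inE fx.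
rewrite /multipartite.
case/orP => [/andP[/eqP vj fvc] | /andP[/andP[_ fvc] nx]]; rewrite fvc andbT.
  by move: xW; rewrite !inE vj.
by rewrite eq_sym.
Qed.

Lemma recolors_Wcol0 c : Wcol c = set0 -> exists g, recolors g.
Proof.
move=> Wc0; exists f; split; first exact: relaxed3S (subsetT W) f_relaxed.
apply: (card_image_avoid (b := c)) => v vW; apply/eqP => fvc.
have : v \in Wcol c by rewrite inE vW fvc eqxx.
by rewrite Wc0 inE.
Qed.

Local Notation bad c := ((#|Vcol c| == 3) || (#|Wcol c| == 3) && (1 < #|Vcol c|)).

Lemma bad_Wcol_one_part c : bad c -> {in Wcol c &, forall x y, tg x = tg y}.
Proof.
move=> bad_c x y xc yc; apply/eqP; apply: contraT => nxy.
pose other z := [set v in Wcol c | tg v != tg z].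
have other_x : 0 < #|other x| by apply/card_gt0P; exists y; rewrite inE yc eq_sym.
have cover : #|Wcol c| <= #|other x| + #|other y|.
  apply: leq_trans (leq_of_leqif (leq_card_setU _ _)); apply: subset_leq_card.
  apply/subsetP => v; rewrite !inE => /andP[-> ->] /=.
  by case: (tg v =P tg x) => [->|]; rewrite ?nxy.
have := card_Vcol_Wcol_other xc; have := card_Vcol_Wcol_other yc.
by rewrite -/(other x) -/(other y); case/orP: bad_c => [/eqP|/andP[/eqP W3 V2]]; lia.
Qed.

Lemma card_Vcol c : Wcol c != set0 -> #|Vcol c| <= 3.
Proof.
by case/set0Pn => x /card_Vcol_Wcol_other; apply: leq_trans; apply: leq_addr.
Qed.

Definition recolor (M : {set T}) (a : 'I_k) (h : T -> 'I_k) v :=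
  if v \in M then a else if f v \in C then h v else f v.

Lemma card_clash_recolor (M : {set T}) a h (P : {set 'I_k}) u :
  {subset P <= C} -> a \notin P -> {in U :\: M, forall v, h v \in P} ->
  {in U :\: M, forall v, #|[set w in U :\: M | h w == h v]| <= 4} ->
  u \in U :\: M -> #|clash e W (recolor M a h) u| <= 3.
Proof.
move=> PC aP hP h_fib uR.
have g_R v : v \in U :\: M -> recolor M a h v = h v.
  by rewrite /recolor !inE => /andP[/negbTE -> /andP[_ ->]].
have fib : [set v in U :\: M | recolor M a h v == recolor M a h u] =
           [set v in U :\: M | h v == h u].
  apply/setP => v; apply/setIdP/setIdP => -[vR];
    by rewrite (g_R v vR) (g_R u uR); exact: conj vR.
rewrite -ltnS; apply: leq_trans (h_fib u uR); rewrite -fib.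
apply: (card_clash_lt_fiber (multipartite_irr tg) uR) => v.
rewrite in_setD (g_R u uR) => /andP[vR vW]; rewrite /recolor.
case: ifP => vM; first by apply: contraNneq aP => ->; apply: hP.
case: ifP => fvC; last by apply: contraFneq _ fvC => ->; apply/PC/hP.
by move: vR vW; rewrite !inE vM fvC /= andbT => /negbTE ->.
Qed.

Lemma card_Wcol2_other_part a b u :
  bad a -> b \in C -> u \in Wcol a ->
  #|[set v in Wcol a :|: Wcol b | tg v != tg u]| <= 3.
Proof.
move=> bad_a bC ua; apply: leq_trans (card_Wcol bC); apply: subset_leq_card.
apply/subsetP => v /setIdP[/setUP[va|//] nvu].
by rewrite (bad_Wcol_one_part bad_a va ua) eqxx in nvu.
Qed.

Lemma recolors_two_bad a b :
  a \in C -> b \in C -> a != b -> bad a -> bad b -> exists g, recolors g.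
Proof.
move=> aC bC ab bad_a bad_b.
pose M := Wcol a :|: Wcol b; pose P := C :\ a :\ b.
have M_col v : v \in M -> (f v == a) || (f v == b).
  by rewrite !inE => /orP[] /andP[_ ->]; rewrite ?orbT.
have inR v : v \in W -> f v \in C -> v \notin M -> v \in U :\: M.
  by move=> vW fvC vM; rewrite in_setD vM inE vW fvC.
have R_P : {in U :\: M, forall v, f v \in P}.
  move=> v /setDP[/setIdP[vW fvC] vM]; rewrite !inE fvC andbT.
  by move: vW vM; rewrite !inE => -> /=; rewrite negb_or => /andP[-> ->].
have card_R : #|U :\: M| <= 4 * #|P|.
  rewrite (card_sum_fibers R_P) mulnC -sum_nat_const; apply: leq_sum => c cP.
  have cC : c \in C by move: cP; rewrite !inE => /and3P[].
  apply: leq_trans (leqW (card_Wcol cC)); apply: subset_leq_card.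
  by apply/subsetP => v /setIdP[/setDP[/setIdP[vW _] _] fvc]; rewrite inE vW.
have [h [hP h_fib]] := exists_map_small_fibers a (isT : 0 < 4) card_R.
have P_C : {subset P <= C} by move=> c /setD1P[_ /setD1P[]].
have aP : a \notin P by rewrite !inE eqxx andbF.
have bP : b \notin P by rewrite !inE eqxx.
exists (recolor M a h); split.
  apply: (relaxed3_recolor (C := C) f_relaxed) => v vW fvC.
  - rewrite /recolor (negbTE fvC) ifN //; apply: contra fvC => /M_col.
    by case/orP => /eqP ->.
  - rewrite /recolor fvC; case: ifP => [_|vM]; first exact: aC.
    exact/P_C/hP/inR/negbT.
  have [vM|vM] := boolP (v \in M); last first.
    exact: (card_clash_recolor P_C aP hP h_fib (inR v vW fvC vM)).
  apply: (@leq_trans #|[set w in M | tg w != tg v]|).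
    apply: subset_leq_card; apply/subsetP => w /setIdP[wW /andP[evw]].
    rewrite /recolor vM; case: ifP => [wM _|wM]; first by rewrite inE wM eq_sym.
    case: ifP => fwC /eqP gwa; last by move: fwC; rewrite gwa aC.
    by move: (hP w (inR w wW fwC (negbT wM))); rewrite gwa (negbTE aP).
  move: vM; rewrite inE => /orP[va|vb]; first exact: card_Wcol2_other_part.
  by rewrite /M setUC; apply: card_Wcol2_other_part.
apply: (card_image_avoid (b := b)) => v vW; rewrite /recolor.
case: ifP => // vM; case: ifP => fvC; last by apply: contraFneq _ fvC => ->.
by apply: contraNneq bP => <-; apply/hP/inR/negbT.
Qed.

Lemma sum_card_cols_le b :
  {in C, forall c, Wcol c != set0} -> b \in C -> {in C, forall c, bad c -> c = b} ->
  \sum_(c in C) (#|Wcol c| + #|Vcol c|) <= 4 * #|C| + 2.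
Proof.
move=> Wcol_neq0 bC only_b; rewrite (big_setD1 b bC) /= (cardsD1 b C) bC.
apply: (@leq_trans (6 + \sum_(c in C :\ b) 4)); last by rewrite sum_nat_const; lia.
apply: leq_add.
  by have := card_Wcol bC; have := card_Vcol (Wcol_neq0 b bC); lia.
apply: leq_sum => c /setD1P[cb cC].
have : ~~ bad c by apply: contra cb => /(only_b c cC) ->.
by have := card_Wcol cC; have := card_Vcol (Wcol_neq0 c cC); lia.
Qed.

Hypothesis V_big : 6 <= #|V|.

Lemma recolors_one_bad b :
  {in C, forall c, Wcol c != set0} -> b \in C -> {in C, forall c, bad c -> c = b} ->
  exists g, recolors g.
Proof.
move=> Wcol_neq0 bC only_b.
have card_V : #|V| = \sum_(c in C) #|Vcol c|.
  by apply: card_sum_fibers => v vV; apply: imset_f.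
have card_U : #|U| = \sum_(c in C) #|Wcol c|.
  rewrite (@card_sum_fibers _ _ f U C) => [|v /setIdP[]//].
  apply: eq_bigr => c cC; apply: eq_card => v; rewrite !inE.
  by case: (f v =P c) => [->|]; rewrite ?cC ?andbT ?andbF.
have card_U_le : #|U :\: set0| <= 4 * #|C :\ b|.
  rewrite setD0 -(leq_add2r 6); apply: leq_trans (leq_add (leqnn _) V_big) _.
  rewrite card_U card_V -big_split /=.
  apply: leq_trans (sum_card_cols_le Wcol_neq0 bC only_b) _.
  by rewrite (cardsD1 b C) bC add1n mulnS addnAC addnC.
have [h [hP h_fib]] := exists_map_small_fibers b (isT : 0 < 4) card_U_le.
have P_C : {subset C :\ b <= C} by move=> c /setD1P[].
have bP : b \notin C :\ b by rewrite !inE eqxx.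
have inR v : v \in W -> f v \in C -> v \in U :\: set0 by rewrite setD0 inE => ->.
exists (recolor set0 b h); split.
  apply: (relaxed3_recolor (C := C) f_relaxed) => v vW fvC.
  - by rewrite /recolor in_set0 (negbTE fvC).
  - by rewrite /recolor in_set0 fvC; apply/P_C/hP/inR.
  exact: (card_clash_recolor P_C bP hP h_fib (inR v vW fvC)).
apply: (card_image_avoid (b := b)) => v vW; rewrite /recolor in_set0.
case: ifP => fvC; last by apply: contraFneq _ fvC => ->.
by apply: contraTneq (hP v (inR v vW fvC)) => ->; rewrite !inE eqxx.
Qed.

Lemma exists_recolors : exists g, recolors g.
Proof.
case: (boolP [exists c in C, Wcol c == set0]) => [/exists_inP[c _ /eqP Wc0] | ].
  exact: recolors_Wcol0 Wc0.
move=> /exists_inPn Wcol_neq0.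
case: (boolP [exists a in C, exists b in C, (a != b) && bad a && bad b]).
  case/exists_inP => a aC /exists_inP[b bC /andP[/andP[ab bad_a] bad_b]].
  exact: recolors_two_bad aC bC ab bad_a bad_b.
move=> /exists_inPn one_bad.
case: (boolP [exists b in C, bad b]) => [/exists_inP[b bC bad_b] | /exists_inPn no_bad].
  apply: (recolors_one_bad Wcol_neq0 bC) => c cC bad_c; apply/eqP.
  by move: (one_bad c cC) => /exists_inPn/(_ b bC); rewrite bad_c bad_b !andbT negbK.
have [v vV] : exists v, v \in V by apply/card_gt0P; apply: leq_trans V_big.
apply: (recolors_one_bad Wcol_neq0 (imset_f f vV)) => c cC bad_c.
by move: (no_bad c cC); rewrite bad_c.
Qed.

End MultipartiteReduction.

Lemma chi3_compl_lt (T : finType) (I : eqType) (tg : T -> I) (j : I) :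
  ~: [set v | tg v == j] != set0 -> 6 <= #|[set v | tg v == j]| ->
  chi3 (multipartite tg) (~: [set v | tg v == j]) < chi3 (multipartite tg) setT.
Proof.
move=> W_n0 V_big.
have /existsP[f f_rel] := colorable3_chi3 (multipartite tg) setT.
have [g [g_rel g_img]] := exists_recolors f_rel V_big.
have /set0Pn[w wW] := W_n0.
have img_gt0 : 0 < #|g @: ~: [set v | tg v == j]|.
  by apply/card_gt0P; exists (g w); apply: imset_f.
have := chi3_min (colorable3_image g_rel (leq_trans img_gt0 g_img) g_img).
by move: img_gt0 g_img; lia.
Qed.

Lemma card_part s (n : 'I_s -> nat) j : #|part s n j| = n j.
Proof.
have -> : part s n j = [set Tagged (fun i => 'I_(n i)) x | x : 'I_(n j)].
  apply/setP => v; rewrite inE; apply/eqP/imsetP => [|[x _ ->]] //.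
  by case: v => i x /= ij; subst i; exists x.
by rewrite card_imset ?card_ord //; apply: eq_from_Tagged.
Qed.

Theorem corollary5p2 (s : nat) (n : 'I_s -> nat) (j : 'I_s) :
  2 <= s -> (forall i, 0 < n i) -> 6 <= n j ->
  chi3 (cmp_adj s n) [set: cmp_vertex s n] =
  chi3 (cmp_adj s n) (~: part s n j) + 1.
Proof.
move=> s_ge2 n_gt0 nj_ge6.
have -> : cmp_adj s n = multipartite tag by [].
have [i ij] : exists i : 'I_s, i != j.
  have [j0|j_neq0] := eqVneq (val j) 0.
    by exists (Ordinal s_ge2); rewrite -val_eqE /= j0.
  by exists (Ordinal (ltnW s_ge2)); rewrite -val_eqE /= eq_sym.
have W_n0 : ~: part s n j != set0.
  by apply/set0Pn; exists (Tagged (fun i => 'I_(n i)) (Ordinal (n_gt0 i))); rewrite !inE.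
apply/eqP; rewrite eqn_leq addn1 chi3_le_add_independent; last first.
  by move=> u v; rewrite !inE /multipartite => /eqP -> /eqP ->; rewrite eqxx.
by rewrite chi3_compl_lt // card_part.
Qed.
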